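(* Let $(\eta_t)_{t\ge1}$ and $(\gamma_t)_{t\ge1}$ be non-increasing sequences of positive learning rates and exploration factors with $\eta_t\le2\gamma_t$ for all $t$. With probability at least $1-\delta$, FTARLShannon guarantees $$\max_{a\in[K]}\mathrm{Regret}(a)\le\frac{\ln K}{\eta_T}+\frac{\ln(3K/\delta)}{2\gamma_T}+\ln(3/\delta)+\sum_{t=1}^T\Big(\frac{\eta_t}{2}+\gamma_t\Big)A_t.$$
   Context: Sleeping bandits with $K\ge2$ arms: in round $t$ an adaptive (non-oblivious) adversary reveals a set $\mathbb A_t\subseteq[K]$ of active arms (with $A_t=|\mathbb A_t|$) and selects losses $\ell_{i,t}\in[0,1]$; the learner pulls $i_t\in\mathbb A_t$ and observes $\hat\ell_t=\ell_{i_t,t}$. With $I_{i,t}=\mathbb 1\{i\in\mathbb A_t\}$, $\mathrm{Regret}(a)=\sum_{t=1}^TI_{a,t}(\ell_{i_t,t}-\ell_{a,t})$. FTARLShannon: $\tilde L_{i,0}=0$; in round $t$, $q_{i,t}=\frac{\exp(-\eta_t\tilde L_{i,t-1})}{\sum_j\exp(-\eta_t\tilde L_{j,t-1})}$, $p_{i,t}=\frac{I_{i,t}q_{i,t}}{\sum_jI_{j,t}q_{j,t}}$, draw $i_t\sim p_t$; set $\tilde\ell_{i,t}=\frac{\mathbb 1\{i_t=i\}\hat\ell_t}{p_{i,t}+\gamma_t}$ for active $i$ and $\tilde\ell_{i,t}=\hat\ell_t-\gamma_t\sum_{j\in\mathbb A_t}\tilde\ell_{j,t}$ for inactive $i$;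 update $\tilde L_{i,t}=\tilde L_{i,t-1}+\tilde\ell_{i,t}$. *)

From mathcomp Require Import all_boot all_order all_algebra.
From mathcomp Require Import reals sequences exp.
Set Implicit Arguments. Unset Strict Implicit. Unset Printing Implicit Defensive.
Import Order.TTheory GRing.Theory Num.Theory.
Local Open Scope ring_scope.

(* A (deterministic, adaptive) adversary is given by two
   functions of the learner's history (the chronological list of arms pulled
   in previous rounds):  act h = active set of the next round,
   loss h i = loss of arm i in the next round.  Round t (1-indexed) has a
   history of length t-1. *)

Section FTARL.
Variables (R : realType) (K : nat).

Definition qdist (eta_t : R) (L : 'I_K -> R) (i : 'I_K) : R :=
  expR (- (eta_t * L i)) / \sum_(j < K) expR (- (eta_t * L j)).

Definition pdist (A : {set 'I_K}) (q : 'I_K -> R) (i : 'I_K) : R :=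
  (i \in A)%:R * q i / \sum_(j in A) q j.

Definition lest (A : {set 'I_K}) (p : 'I_K -> R) (g : R) (it : 'I_K)
    (lhat : R) (i : 'I_K) : R :=
  if i \in A then (it == i)%:R * lhat / (p i + g)
  else lhat - g * \sum_(j in A) ((it == j)%:R * lhat / (p j + g)).

Variables (eta gamma : nat -> R)
          (act : seq 'I_K -> {set 'I_K}) (loss : seq 'I_K -> 'I_K -> R).

(* distribution p_t used after history h (round t = size h + 1), given the
   cumulative estimates L = tilde L_{t-1} *)
Definition probs_of (h : seq 'I_K) (L : 'I_K -> R) : 'I_K -> R :=
  pdist (act h) (qdist (eta (size h).+1) L).

Definition Lnext (h : seq 'I_K) (L : 'I_K -> R) (it : 'I_K) : 'I_K -> R :=
  fun i => L i + lest (act h) (probs_of h L) (gamma (size h).+1) it (loss h it) i.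

Fixpoint Lcum_aux (pre rest : seq 'I_K) (L : 'I_K -> R) : 'I_K -> R :=
  match rest with
  | [::] => L
  | x :: r => Lcum_aux (rcons pre x) r (Lnext pre L x)
  end.

Definition Lcum (h : seq 'I_K) : 'I_K -> R := Lcum_aux [::] h (fun _ => 0).

Definition ftarl_p (h : seq 'I_K) : 'I_K -> R := probs_of h (Lcum h).

(* probability that FTARLShannon pulls the arm sequence s in rounds 1..T *)
Definition path_prob (T : nat) (s : T.-tuple 'I_K) : R :=
  \prod_(t < T) ftarl_p (take t s) (tnth s t).

Definition regret (T : nat) (s : T.-tuple 'I_K) (a : 'I_K) : R :=
  \sum_(t < T) (a \in act (take t s))%:R *
      (loss (take t s) (tnth s t) - loss (take t s) a).

Definition weighted_active (T : nat) (s : T.-tuple 'I_K) : R :=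
  \sum_(t < T) (eta t.+1 / 2 + gamma t.+1) * #|act (take t s)|%:R.

End FTARL.

From mathcomp Require Import all_boot all_order all_algebra.
From mathcomp Require Import reals sequences exp.
From mathcomp Require interval_inference normedtype derive realfun convex.
From mathcomp Require Import ring lra.
Set Implicit Arguments. Unset Strict Implicit. Unset Printing Implicit Defensive.
Import Order.TTheory GRing.Theory Num.Theory.
Local Open Scope ring_scope.

(* The loss estimates are nonnegative, so the exponential-weights analysis with a
   non-increasing learning rate bounds their regret by ln K / eta_T plus a
   second-moment term.  With implicit exploration that second moment is at most
   S_t, the total estimate of the active arms, and the observed loss exceeds the
   mean estimate by exactly gamma_t S_t; along every path this gives
     Regret(a) <= ln K / eta_T + sum_t (eta_t/2 + gamma_t) S_t
                  + sum_t I_{a,t} (est_{a,t} - l_{a,t}).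
   Since p e^(u/(p+g)) <= p + u for 0 <= u <= 2g, exp (sum_i alpha_i (est_{i,t} - l_{i,t}))
   is a supermartingale increment whenever 0 <= alpha_i <= 2 gamma_t.  Markov's
   inequality for alpha = 2 gamma_T 1_a (one event per arm, at level delta/(3K)) and
   for alpha = eta_t/2 + gamma_t (at level delta/3), and a union bound, control
   both sums. *)

Section ExpInequalities.
Import interval_inference normedtype derive realfun convex numFieldNormedType.Exports.
Variable R : realType.

Lemma expR_pade_le (w : R) : 0 <= w -> (2 - w) * expR w <= 2 + w.
Proof.
move=> w0.
pose g : R -> R := fun x => 2 + x - (2 - x) * expR x.
have dg (x : R) : is_derive x (1 : R) g (1 - (1 - x) * expR x).
  rewrite /g; apply: is_derive_eq => /=.
  by rewrite /GRing.scale /=; ring.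
have g_ge : g 0 <= g w.
  apply: ger0_derive1_ndecry => //.
  - move=> x _; rewrite derive1E derive_val subr_ge0.
    have := ler_wpM2r (expR_ge0 x) (expR_ge1Dx (- x)).
    by rewrite -expRD addNr expR0 addrC.
  - by apply: derivable_within_continuous => x _; exact: ex_derive.
by move: g_ge; rewrite /g expR0; lra.
Qed.

Lemma expR_ge_quadratic (w : R) : 0 <= w -> 1 <= (1 - w + w ^+ 2 / 2) * expR w.
Proof.
move=> w0.
pose g : R -> R := fun x => (1 - x + x ^+ 2 / 2) * expR x.
have dg (x : R) : is_derive x (1 : R) g (x ^+ 2 / 2 * expR x).
  rewrite /g; apply: is_derive_eq => /=.
  by rewrite /GRing.scale /=; field.
have : g 0 <= g w.
  apply: ger0_derive1_ndecry => //.
  - move=> x _; rewrite derive1E derive_val.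
    by rewrite mulr_ge0 ?expR_ge0 ?divr_ge0 ?sqr_ge0.
  - by apply: derivable_within_continuous => x _; exact: ex_derive.
by rewrite /g expR0; lra.
Qed.

Lemma expR_convex_mix (r u : R) : 0 <= r <= 1 -> expR (r * u) <= r * expR u + (1 - r).
Proof.
case/andP=> r0 r1; have := convex_expR (Itv01 r0 r1) u 0.
by rewrite !convRE /= mulr0 addr0 expR0 mulr1.
Qed.

Lemma expRN_le_quadratic (w : R) : 0 <= w -> expR (- w) <= 1 - w + w ^+ 2 / 2.
Proof.
move=> w0; have := ler_wpM2r (expR_ge0 (- w)) (expR_ge_quadratic w0).
by rewrite mul1r -mulrA expRxMexpNx_1 mulr1.
Qed.

Lemma expR_implicit_exploration (p g u : R) :
  0 <= p -> 0 < g -> 0 <= u <= 2 * g -> p * expR (u / (p + g)) <= p + u.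
Proof.
move=> p0 g0 /andP[u0 u2g].
have [->|p_neq0] := eqVneq p 0; first by rewrite mul0r add0r.
have p_gt0 : 0 < p by rewrite lt_neqAle eq_sym p_neq0.
have pg0 : 0 < p + g by lra.
set w := u / (p + g).
have uE : u = w * (p + g) by rewrite /w mulfVK ?gt_eqF.
have w0 : 0 <= w by exact: divr_ge0 u0 (ltW pg0).
have w_lt2 : w < 2 by rewrite -(ltr_pM2r pg0) -uE; lra.
have pade : p * (2 + w) <= (p + u) * (2 - w).
  have gap : (p + u) * (2 - w) - p * (2 + w) = w * (2 * g - u).
    by rewrite {1}uE [in RHS]uE; ring.
  by rewrite -subr_ge0 gap mulr_ge0 // subr_ge0.
rewrite -(ler_pM2r (_ : 0 < 2 - w)); last by lra.
apply: le_trans pade; rewrite -mulrA [expR w * _]mulrC.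
by apply: ler_wpM2l => //; exact: expR_pade_le.
Qed.
End ExpInequalities.

Section ExponentialWeights.
Variables (R : realType) (K : nat).
Hypothesis K_gt0 : (0 < K)%N.

Let Kr_gt0 : 0 < K%:R :> R. Proof. by rewrite ltr0n. Qed.

Lemma sumr_pos_gt0 (f : 'I_K -> R) : (forall i, 0 < f i) -> 0 < \sum_(i < K) f i.
Proof.
move=> f_gt0; rewrite (bigD1 (Ordinal K_gt0)) //= ltr_wpDr ?f_gt0 //.
by rewrite sumr_ge0 // => i _; exact: ltW.
Qed.

Lemma sum_expR_gt0 (f : 'I_K -> R) : 0 < \sum_(i < K) expR (f i).
Proof. by apply: sumr_pos_gt0 => i; exact: expR_gt0. Qed.

Lemma qdist_gt0 (e : R) (L : 'I_K -> R) i : 0 < qdist e L i.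
Proof. by rewrite divr_gt0 ?expR_gt0 ?sum_expR_gt0. Qed.

Lemma sum_qdist (e : R) (L : 'I_K -> R) : \sum_(i < K) qdist e L i = 1.
Proof. by rewrite -mulr_suml divff // gt_eqF ?sum_expR_gt0. Qed.

(* Minus the usual potential, so that it is nondecreasing in the learning rate
   (ew_potential_le): this is what makes a non-increasing eta harmless. *)
Definition ew_potential (e : R) (L : 'I_K -> R) : R :=
  ln ((\sum_(i < K) expR (- (e * L i))) / K%:R) / e.

Lemma ew_potential0 (e : R) : ew_potential e (fun=> 0) = 0.
Proof.
rewrite /ew_potential; under eq_bigr do rewrite mulr0 oppr0 expR0.
by rewrite sumr_const card_ord divff ?ln1 ?mul0r // gt_eqF.
Qed.

Lemma mean_expR_scale_le (r : R) (u : 'I_K -> R) : 0 <= r <= 1 ->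
  (\sum_(i < K) expR (r * u i)) / K%:R <=
  expR (r * ln ((\sum_(i < K) expR (u i)) / K%:R)).
Proof.
move=> r01; set M := ln _.
have eM : expR M = (\sum_(i < K) expR (u i)) / K%:R.
  by rewrite lnK // posrE divr_gt0 ?sum_expR_gt0.
have le_i i : expR (r * u i) <= expR (r * M) * (r * (expR (u i) / expR M) + (1 - r)).
  have := expR_convex_mix (u i - M) r01; rewrite expRB => h.
  rewrite -[r * u i](subrK (r * M)) -mulrBr expRD mulrC.
  by apply: ler_wpM2l; first exact: expR_ge0.
rewrite ler_pdivrMr //; apply: le_trans (ler_sum _ (fun i _ => le_i i)) _.
rewrite -mulr_sumr big_split /= -mulr_sumr -mulr_suml sumr_const card_ord eM.
apply: ler_wpM2l; first exact: expR_ge0.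
have Sgt0 := sum_expR_gt0 u.
rewrite -mulr_natr (_ : _ / (_ / _) = K%:R); first by lra.
by field; rewrite !gt_eqF.
Qed.

Lemma ew_potential_le (e e' : R) (L : 'I_K -> R) : 0 < e' -> e' <= e ->
  ew_potential e' L <= ew_potential e L.
Proof.
move=> e'0 e'e; have e0 : 0 < e := lt_le_trans e'0 e'e.
have r01 : 0 <= e' / e <= 1 by rewrite divr_ge0 ?(ltW e'0) ?(ltW e0) //= ler_pdivrMr // mul1r.
have := mean_expR_scale_le (fun i => - (e * L i)) r01.
rewrite (eq_bigr (fun i => expR (- (e' * L i)))) => [|i _]; last first.
  by congr expR; field; rewrite gt_eqF.
rewrite -ler_ln ?posrE ?expR_gt0 ?divr_gt0 ?sum_expR_gt0 // expRK => h.
rewrite /ew_potential ler_pdivrMr // mulrAC ler_pdivlMr //.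
set B := ln (_ / _) in h *; apply: le_trans (ler_wpM2r (ltW e0) h) _.
by rewrite mulrAC divfK ?gt_eqF // mulrC.
Qed.

Lemma ew_potentialD (e : R) (L l : 'I_K -> R) : 0 < e ->
  ew_potential e (fun i => L i + l i) =
  ew_potential e L + ln (\sum_(i < K) qdist e L i * expR (- (e * l i))) / e.
Proof.
move=> e0; set S := \sum_(i < K) expR (- (e * L i)).
have S0 : 0 < S by exact: sum_expR_gt0.
set Z := \sum_(i < K) _.
have SZ : \sum_(i < K) expR (- (e * (L i + l i))) = Z * S.
  rewrite /Z mulr_suml; apply: eq_bigr => i _.
  by rewrite mulrDr opprD expRD /qdist -/S; field; rewrite gt_eqF.
have Z0 : 0 < Z by rewrite -(pmulr_lgt0 _ S0) -SZ sum_expR_gt0.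
rewrite /ew_potential SZ -mulrA lnM ?posrE ?divr_gt0 //.
by rewrite -/S mulrDl addrC.
Qed.

Lemma ew_potential_step (e : R) (L l : 'I_K -> R) : 0 < e -> (forall i, 0 <= l i) ->
  \sum_(i < K) qdist e L i * l i - e / 2 * \sum_(i < K) qdist e L i * l i ^+ 2 <=
  ew_potential e L - ew_potential e (fun i => L i + l i).
Proof.
move=> e0 l0; rewrite ew_potentialD // opprD addrA subrr add0r.
set q := qdist e L; set Z := \sum_(i < K) q i * expR (- (e * l i)).
set m1 := \sum_(i < K) q i * l i; set m2 := \sum_(i < K) q i * l i ^+ 2.
have Zle : Z <= 1 - e * m1 + e ^+ 2 / 2 * m2.
  rewrite (_ : 1 - _ + _ = \sum_(i < K) q i * (1 - e * l i + (e * l i) ^+ 2 / 2)).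
    apply: ler_sum => i _; apply: ler_wpM2l; first exact: ltW (qdist_gt0 e L i).
    exact/expRN_le_quadratic/mulr_ge0/l0/ltW.
  rewrite -{1}(sum_qdist e L) /m1 /m2 !mulr_sumr -sumrB -big_split /=.
  by apply: eq_bigr => i _; rewrite /q exprMn; ring.
have Z0 : 0 < Z by apply: sumr_pos_gt0 => i; rewrite mulr_gt0 ?qdist_gt0 ?expR_gt0.
have lnZ : ln Z <= Z - 1 by have := @le_ln1Dx R (Z - 1); rewrite subrKC; apply; lra.
rewrite -[X in _ <= X]mulNr ler_pdivlMr //.
have : (m1 - e / 2 * m2) * e = e * m1 - e ^+ 2 / 2 * m2 by rewrite expr2; ring.
lra.
Qed.

Lemma ew_potential_ge (e : R) (L : 'I_K -> R) (a : 'I_K) :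
  0 < e -> - ew_potential e L <= L a + ln K%:R / e.
Proof.
move=> e0; set S := \sum_(i < K) expR (- (e * L i)).
have Sa : expR (- (e * L a)) <= S.
  by rewrite /S (bigD1 a) //= lerDl sumr_ge0 // => i _; exact: expR_ge0.
have : ln (expR (- (e * L a)) / K%:R) <= ln (S / K%:R).
  by rewrite ler_ln ?posrE ?divr_gt0 ?expR_gt0 ?sum_expR_gt0 // ler_pM2r ?invr_gt0.
rewrite ln_div ?posrE ?expR_gt0 // expRK => h.
rewrite /ew_potential -/S -mulNr ler_pdivrMr // mulrDl divfK ?gt_eqF //.
lra.
Qed.

Variables (eta : nat -> R) (l : nat -> 'I_K -> R).
Hypothesis eta_gt0 : forall t, (1 <= t)%N -> 0 < eta t.
Hypothesis eta_dec : forall t, (1 <= t)%N -> eta t.+1 <= eta t.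
Hypothesis l_ge0 : forall t i, 0 <= l t i.

Definition cumloss n (i : 'I_K) : R := \sum_(0 <= t < n) l t i.

Lemma ew_sum_le_potential n :
  \sum_(0 <= t < n.+1) (\sum_(i < K) qdist (eta t.+1) (cumloss t) i * l t i
     - eta t.+1 / 2 * \sum_(i < K) qdist (eta t.+1) (cumloss t) i * l t i ^+ 2)
  <= - ew_potential (eta n.+1) (cumloss n.+1).
Proof.
have cumlossS t : cumloss t.+1 = fun i => cumloss t i + l t i.
  by apply: boolp.funext => i; rewrite /cumloss big_nat_recr.
elim: n => [|n IH].
  rewrite big_nat1 [cumloss 1]cumlossS.
  apply: le_trans (ew_potential_step (cumloss 0) (eta_gt0 (ltn0Sn 0)) (l_ge0 0)) _.
  have -> : cumloss 0 = fun=> 0 by apply: boolp.funext => i; rewrite /cumloss big_geq.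
  by rewrite ew_potential0 sub0r.
rewrite big_nat_recr //= [cumloss n.+2]cumlossS.
have := ew_potential_step (cumloss n.+1) (eta_gt0 (ltn0Sn n.+1)) (l_ge0 n.+1).
have := ew_potential_le (cumloss n.+1) (eta_gt0 (ltn0Sn n.+1)) (eta_dec (ltn0Sn n)).
lra.
Qed.

Lemma ew_regret_le T a : (0 < T)%N ->
  \sum_(0 <= t < T) (\sum_(i < K) qdist (eta t.+1) (cumloss t) i * l t i
     - eta t.+1 / 2 * \sum_(i < K) qdist (eta t.+1) (cumloss t) i * l t i ^+ 2)
  <= cumloss T a + ln K%:R / eta T.
Proof.
case: T => // T _; apply: le_trans (ew_sum_le_potential T) _.
by apply: ew_potential_ge; exact: eta_gt0.
Qed.

End ExponentialWeights.

Lemma sum_delta_mul (R : pzSemiRingType) (I : finType) (A : {pred I}) (a : I) (f : I -> R) :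
  \sum_(i in A) (a == i)%:R * f i = (a \in A)%:R * f a.
Proof.
rewrite big_mkcond (bigD1 a) //= big1 ?addr0 => [|i /negbTE ai].
  by case: (a \in A); rewrite ?mul1r ?mul0r // eqxx mul1r.
by rewrite eq_sym ai mul0r if_same.
Qed.

Section EstimatorRound.
Variables (R : realType) (K : nat) (A : {set 'I_K}) (q : 'I_K -> R) (g : R) (l : 'I_K -> R).
Hypothesis q_ge0 : forall i, 0 <= q i.
Hypothesis sum_q : \sum_(i < K) q i = 1.
Hypothesis qA_gt0 : 0 < \sum_(j in A) q j.
Hypothesis g_gt0 : 0 < g.
Hypothesis l01 : forall i, 0 <= l i <= 1.

Local Notation p := (pdist A q).
Local Notation est x := (lest A p g x (l x)).

Lemma pdist_ge0 i : 0 <= p i.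
Proof. by rewrite mulr_ge0 ?invr_ge0 ?mulr_ge0 ?ler0n // ltW. Qed.

Lemma pdist_inactive i : i \notin A -> p i = 0.
Proof. by move=> /negbTE iA; rewrite /pdist iA !mul0r. Qed.

Lemma pdist_active i : i \in A -> p i = q i / \sum_(j in A) q j.
Proof. by move=> iA; rewrite /pdist iA mul1r. Qed.

Lemma pdist_le1 i : p i <= 1.
Proof.
have [iA|/pdist_inactive ->] := boolP (i \in A); last exact: ler01.
rewrite pdist_active // ler_pdivrMr // mul1r (bigD1 i) //= lerDl.
by rewrite sumr_ge0.
Qed.

Lemma sum_pdist_active : \sum_(i in A) p i = 1.
Proof.
rewrite (eq_bigr _ (fun i => pdist_active (i := i))) -mulr_suml divff //.
by rewrite gt_eqF.
Qed.

Lemma sum_pdist : \sum_(i < K) p i = 1.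
Proof.
rewrite (bigID (mem A)) /= sum_pdist_active big1 ?addr0 // => i.
exact: pdist_inactive.
Qed.

Lemma q_active i : i \in A -> q i = p i * \sum_(j in A) q j.
Proof. by move=> iA; rewrite pdist_active // divfK // gt_eqF. Qed.

Lemma sum_q_inactive : \sum_(i | i \notin A) q i = 1 - \sum_(j in A) q j.
Proof. by rewrite -sum_q [in RHS](bigID (mem A)) /= addrAC subrr add0r. Qed.

Lemma sum_lest_active x : \sum_(j in A) est x j = (x \in A)%:R * (l x / (p x + g)).
Proof.
rewrite -(sum_delta_mul A x (fun j => l x / (p j + g))); apply: eq_bigr => j jA.
by rewrite /lest jA mulrA.
Qed.

Lemma lest_inactive x i : i \notin A -> est x i = l x - g * \sum_(j in A) est x j.
Proof.
move=> /negbTE iA; rewrite {1}/lest iA; congr (_ - g * _).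
by apply: eq_bigr => j jA; rewrite /lest jA.
Qed.

Lemma lest_ge0 x i : 0 <= est x i.
Proof.
have pg_gt0 j : 0 < p j + g by rewrite ltr_wpDl ?pdist_ge0.
have [l0 l1] := andP (l01 x).
have [iA|iA] := boolP (i \in A).
  by rewrite /lest iA mulr_ge0 ?mulr_ge0 ?ler0n ?invr_ge0 // ltW.
rewrite lest_inactive // sum_lest_active subr_ge0.
case: (x \in A); rewrite ?mul0r ?mulr0 // mul1r mulrCA ler_piMr //.
by rewrite ler_pdivrMr // mul1r lerDr pdist_ge0.
Qed.

Lemma lest_active_neq x i : i \in A -> i != x -> est x i = 0.
Proof. by move=> iA ix; rewrite /lest iA eq_sym (negbTE ix) !mul0r. Qed.

Lemma lest_active_eq x : x \in A -> est x x = l x / (p x + g).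
Proof. by move=> xA; rewrite /lest xA eqxx mul1r. Qed.

Lemma sum_lest_ge0 x : 0 <= \sum_(j in A) est x j.
Proof. by rewrite sumr_ge0 // => j _; exact: lest_ge0. Qed.

Section PulledArmActive.
Variable x : 'I_K.
Hypothesis xA : x \in A.

Let S := \sum_(j in A) est x j.

Let S_def : S = l x / (p x + g).
Proof. by rewrite /S sum_lest_active xA mul1r. Qed.

Let lxE : l x - g * S = p x * S.
Proof. by rewrite S_def; field; rewrite gt_eqF // ltr_wpDl ?pdist_ge0. Qed.

Let sum_active_at (F : 'I_K -> R) :
  (forall i, i \in A -> i != x -> F i = 0) -> \sum_(i in A) F i = F x.
Proof. by move=> F0; rewrite (bigD1 x) //= big1 ?addr0 // => i /andP[]; exact: F0. Qed.

Lemma mean_lest : \sum_(i < K) q i * est x i = l x - g * S.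
Proof.
rewrite (bigID (mem A)) /= sum_active_at => [|i iA ix]; last by rewrite lest_active_neq ?mulr0.
rewrite (eq_bigr _ (fun i iA => congr1 (fun y => q i * y) (lest_inactive x iA))).
rewrite -/S -mulr_suml sum_q_inactive lest_active_eq // -S_def q_active // lxE.
by ring.
Qed.

Lemma sum_sq_lest_le : \sum_(i < K) q i * est x i ^+ 2 <= S.
Proof.
rewrite (bigID (mem A)) /= sum_active_at => [|i iA ix]; last first.
  by rewrite lest_active_neq ?expr0n ?mulr0.
rewrite (eq_bigr _ (fun i iA => congr1 (fun y => q i * y ^+ 2) (lest_inactive x iA))).
rewrite -/S -mulr_suml sum_q_inactive lest_active_eq // -S_def q_active // lxE.
have S0 : 0 <= S := sum_lest_ge0 x.
have pxS1 : p x * S <= 1.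
  have [_ lx1] := andP (l01 x); have := mulr_ge0 (ltW g_gt0) S0; have := lxE.
  lra.
set Q := \sum_(j in A) q j; set px := p x in pxS1 *.
have Q1 : Q <= 1 by rewrite -sum_q (bigID (mem A)) /= lerDl sumr_ge0.
have [px0 px1] := (pdist_ge0 x, pdist_le1 x).
have : px * Q * S ^+ 2 + (1 - Q) * (px * S) ^+ 2 <= px * S * S.
  have : (1 - Q) * (px * S) ^+ 2 <= (1 - Q) * (px * S * S).
    apply: ler_wpM2l; first by rewrite subr_ge0.
    have : 0 <= (1 - px) * (px * (S * S)).
      by rewrite mulr_ge0 ?subr_ge0 // (mulr_ge0 px0 (mulr_ge0 S0 S0)).
    by rewrite expr2; lra.
  rewrite expr2; lra.
move=> /le_trans; apply; rewrite -[X in _ <= X]mul1r ler_wpM2r //.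
Qed.

Lemma round_regret_le a :
  (a \in A)%:R * (l x - l a) <=
  g * S + (\sum_(i < K) q i * est x i - est x a) + (a \in A)%:R * (est x a - l a).
Proof.
rewrite mean_lest; have [aA|aA] := boolP (a \in A); rewrite ?mul1r ?mul0r.
  lra.
by rewrite lest_inactive // addr0 subrr addr0 mulr_ge0 ?sum_lest_ge0 ?ltW.
Qed.

End PulledArmActive.

Lemma exp_moment_lest (alpha : 'I_K -> R) : (forall i, 0 <= alpha i <= 2 * g) ->
  \sum_(x < K) p x * expR (\sum_(i in A) alpha i * (est x i - l i)) <= 1.
Proof.
move=> alpha_bd; set La := \sum_(i in A) alpha i * l i.
have step x : x \in A ->
    p x * expR (\sum_(i in A) alpha i * (est x i - l i)) <= (p x + alpha x * l x) * expR (- La).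
  move=> xA; under eq_bigr do rewrite mulrBr.
  rewrite sumrB (bigD1 x) //= big1 ?addr0 => [|i /andP[iA ix]]; last first.
    by rewrite lest_active_neq ?mulr0.
  rewrite lest_active_eq // expRD mulrA ler_wpM2r ?expR_ge0 // mulrA.
  have [a0 a2] := andP (alpha_bd x); have [l0 l1] := andP (l01 x).
  apply: expR_implicit_exploration; rewrite ?pdist_ge0 ?mulr_ge0 //=.
  by apply: le_trans a2; rewrite ler_piMr.
rewrite (bigID (mem A)) /= [X in _ + X]big1 ?addr0 => [|x /pdist_inactive ->]; last first.
  by rewrite mul0r.
apply: le_trans (ler_sum _ step) _.
rewrite -mulr_suml big_split /= sum_pdist_active -/La.
have := ler_wpM2r (expR_ge0 (- La)) (expR_ge1Dx La).
by rewrite expRxMexpNx_1.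
Qed.

End EstimatorRound.

Lemma sum_tuple_cons (V : nmodType) (T : finType) n (F : n.+1.-tuple T -> V) :
  \sum_(s : n.+1.-tuple T) F s = \sum_(x : T) \sum_(s : n.-tuple T) F [tuple of x :: s].
Proof.
rewrite pair_big /= (reindex (fun xs : T * n.-tuple T => [tuple of xs.1 :: xs.2])) //=.
exists (fun s => (thead s, [tuple of behead s])) => [[x s] _ | s _] /=.
  by congr pair; apply: val_inj.
by rewrite [in RHS](tuple_eta s).
Qed.

Lemma ler_sum_union (R : numDomainType) (I J : finType) (P Q : pred I) (Qs : J -> pred I)
    (F : I -> R) :
  (forall i, 0 <= F i) -> (forall i, P i -> 0 < F i -> Q i || [exists j, Qs j i]) ->
  \sum_(i | P i) F i <= \sum_(i | Q i) F i + \sum_j \sum_(i | Qs j i) F i.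
Proof.
move=> F_ge0 PQ; rewrite (exchange_big_dep xpredT) //= [X in _ <= X + _]big_mkcond.
rewrite -big_split big_mkcond /=; apply: ler_sum => i _.
set E := \sum_(j | Qs j i) F i; have E_ge0 : 0 <= E by rewrite sumr_ge0.
have QF_ge0 : 0 <= (if Q i then F i else 0) by case: ifP.
case: ifP => Pi; last by rewrite addr_ge0.
have [->|Fi_neq0] := eqVneq (F i) 0; first by rewrite if_same add0r.
have Fi_gt0 : 0 < F i by rewrite lt_def Fi_neq0 F_ge0.
case/orP: (PQ i Pi Fi_gt0) => [Qi|/existsP[j Qsj]]; first by rewrite Qi lerDl.
apply: le_trans (_ : F i <= E) _; last by rewrite lerDr.
by rewrite /E (bigD1 j) //= lerDl sumr_ge0.
Qed.

Section PathSums.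
Variables (R : realType) (K : nat) (P : seq 'I_K -> 'I_K -> R).

Definition path_weight (h : seq 'I_K) n (s : n.-tuple 'I_K) : R :=
  \prod_(t < n) P (h ++ take t s) (tnth s t).

Definition path_sum (D : seq 'I_K -> 'I_K -> R) (h : seq 'I_K) n (s : n.-tuple 'I_K) : R :=
  \sum_(t < n) D (h ++ take t s) (tnth s t).

Lemma path_weight_cons h n x (s : n.-tuple 'I_K) :
  path_weight h [tuple of x :: s] = P h x * path_weight (rcons h x) s.
Proof.
rewrite /path_weight big_ord_recl cats0; congr (_ * _).
by apply: eq_bigr => t _; rewrite tnthS /= cat_rcons.
Qed.

Lemma path_sum_cons D h n x (s : n.-tuple 'I_K) :
  path_sum D h [tuple of x :: s] = D h x + path_sum D (rcons h x) s.
Proof.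
rewrite /path_sum big_ord_recl cats0; congr (_ + _).
by apply: eq_bigr => t _; rewrite tnthS /= cat_rcons.
Qed.

Lemma sum_path_weight_cons n h (F : n.+1.-tuple 'I_K -> R) :
  \sum_(s : n.+1.-tuple 'I_K) path_weight h s * F s =
  \sum_(x < K) P h x * \sum_(s : n.-tuple 'I_K) path_weight (rcons h x) s * F [tuple of x :: s].
Proof.
rewrite sum_tuple_cons; apply: eq_bigr => x _; rewrite mulr_sumr.
by apply: eq_bigr => s _; rewrite path_weight_cons mulrA.
Qed.

Lemma sum_path_weight n h : (forall h, \sum_(x < K) P h x = 1) ->
  \sum_(s : n.-tuple 'I_K) path_weight h s = 1.
Proof.
move=> P1; elim: n h => [|n IH] h.
  by rewrite (eq_bigr (fun=> 1)) ?sumr_const ?card_tuple // => s _; rewrite /path_weight big_ord0.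
rewrite -[RHS](P1 h) -(eq_bigr _ (fun s _ => mulr1 _)) sum_path_weight_cons.
by apply: eq_bigr => x _; rewrite (eq_bigr _ (fun s _ => mulr1 _)) IH mulr1.
Qed.

Hypothesis P_ge0 : forall h x, 0 <= P h x.

Lemma path_weight_ge0 h n (s : n.-tuple 'I_K) : 0 <= path_weight h s.
Proof. by rewrite prodr_ge0. Qed.

Variable D : seq 'I_K -> 'I_K -> R.

Lemma sum_path_weight_expR_le1 n h :
  (forall h', (size h' < size h + n)%N -> \sum_(x < K) P h' x * expR (D h' x) <= 1) ->
  \sum_(s : n.-tuple 'I_K) path_weight h s * expR (path_sum D h s) <= 1.
Proof.
elim: n h => [|n IH] h Dstep.
  rewrite (eq_bigr (fun=> 1)) ?sumr_const ?card_tuple // => s _.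
  by rewrite /path_weight /path_sum !big_ord0 expR0 mulr1.
rewrite sum_path_weight_cons; apply: le_trans (Dstep h _); last by rewrite addnS ltnS leq_addr.
apply: ler_sum => x _; under eq_bigr do rewrite path_sum_cons expRD mulrCA.
rewrite -mulr_sumr mulrA ler_piMr ?mulr_ge0 ?expR_ge0 // IH // => h'.
by rewrite size_rcons addSnnS; exact: Dstep.
Qed.

Lemma sum_path_weight_gt_le n c :
  (forall h, (size h < n)%N -> \sum_(x < K) P h x * expR (D h x) <= 1) ->
  \sum_(s : n.-tuple 'I_K | c < path_sum D [::] s) path_weight [::] s <= expR (- c).
Proof.
move=> Dstep; have := sum_path_weight_expR_le1 (h := [::]) Dstep.
move=> /(ler_wpM2l (expR_ge0 (- c))); rewrite mulr1; apply: le_trans.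
rewrite mulr_sumr big_mkcond; apply: ler_sum => s _ /=; case: ifP => cs.
  rewrite mulrCA -expRD; apply: ler_peMr; first exact: path_weight_ge0.
  by apply/ltW; rewrite expR_gt1 addrC subr_gt0.
by rewrite !mulr_ge0 ?expR_ge0 ?path_weight_ge0.
Qed.

End PathSums.

Section FTARLShannon.
Variables (R : realType) (K : nat) (eta gamma : nat -> R)
          (act : seq 'I_K -> {set 'I_K}) (loss : seq 'I_K -> 'I_K -> R).
Hypothesis K_gt0 : (0 < K)%N.
Hypothesis gamma_gt0 : forall t, (1 <= t)%N -> 0 < gamma t.
Hypothesis act_neq0 : forall h, act h != set0.
Hypothesis loss01 : forall h i, 0 <= loss h i <= 1.

Local Notation Lcum := (Lcum eta gamma act loss).
Local Notation p := (ftarl_p eta gamma act loss).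
Local Notation q h := (qdist (eta (size h).+1) (Lcum h)).
Local Notation est h x := (lest (act h) (p h) (gamma (size h).+1) x (loss h x)).

Let g_gt0 (h : seq 'I_K) : 0 < gamma (size h).+1. Proof. exact: gamma_gt0. Qed.
Let q_ge0 h i : 0 <= q h i. Proof. exact/ltW/qdist_gt0. Qed.
Let sum_q h : \sum_(i < K) q h i = 1. Proof. exact: sum_qdist. Qed.
Let qdist_act_gt0 (e : R) (L : 'I_K -> R) h : 0 < \sum_(j in act h) qdist e L j.
Proof.
have /set0Pn[j jA] := act_neq0 h.
by rewrite (bigD1 j) //= ltr_wpDr ?qdist_gt0 ?sumr_ge0 // => i _; exact/ltW/qdist_gt0.
Qed.
Let qA_gt0 h : 0 < \sum_(j in act h) q h j. Proof. exact: qdist_act_gt0. Qed.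

Lemma ftarl_p_ge0 h x : 0 <= p h x.
Proof. exact: pdist_ge0 (q_ge0 h) (qA_gt0 h) x. Qed.

Lemma sum_ftarl_p h : \sum_(x < K) p h x = 1.
Proof. exact: sum_pdist (qA_gt0 h). Qed.

Lemma ftarl_p_inactive h x : x \notin act h -> p h x = 0.
Proof. exact: pdist_inactive. Qed.

Lemma ftarl_exp_moment_le1 h (alpha : 'I_K -> R) :
  (forall i, 0 <= alpha i <= 2 * gamma (size h).+1) ->
  \sum_(x < K) p h x * expR (\sum_(i in act h) alpha i * (est h x i - loss h i)) <= 1.
Proof. exact: exp_moment_lest (q_ge0 h) (qA_gt0 h) (g_gt0 h) (loss01 h) alpha. Qed.

Lemma Lcum_aux_rcons pre h x L :
  Lcum_aux eta gamma act loss pre (rcons h x) L =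
  Lnext eta gamma act loss (pre ++ h) (Lcum_aux eta gamma act loss pre h L) x.
Proof.
elim: h pre L => [|y h IH] pre L /=; first by rewrite cats0.
by rewrite IH cat_rcons.
Qed.

Lemma Lcum_rcons h x : Lcum (rcons h x) = fun i => Lcum h i + est h x i.
Proof. exact: Lcum_aux_rcons. Qed.

Variable x0 : 'I_K.

(* The estimates along a path, indexed by the round rather than by the size of
   the history, so that they are literally the loss sequence of the
   exponential-weights analysis (Lcum_take). *)
Definition est_path (s : seq 'I_K) (t : nat) (i : 'I_K) : R :=
  let h := take t s in let x := nth x0 s t in
  lest (act h) (pdist (act h) (qdist (eta t.+1) (Lcum h))) (gamma t.+1) x (loss h x) i.

Lemma Lcum_take s t : (t <= size s)%N -> Lcum (take t s) = cumloss (est_path s) t.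
Proof.
elim: t => [|t IH] ts; first by apply: boolp.funext => i; rewrite take0 /cumloss big_geq.
rewrite (take_nth x0) // Lcum_rcons /ftarl_p /probs_of size_takel ?(ltnW ts) //.
rewrite {1}IH ?(ltnW ts) //.
by apply: boolp.funext => i; rewrite /cumloss big_nat_recr.
Qed.

Lemma est_path_ge0 s t i : 0 <= est_path s t i.
Proof.
exact: lest_ge0 (fun j => ltW (qdist_gt0 K_gt0 _ _ j)) (qdist_act_gt0 _ _ _)
  (gamma_gt0 (ltn0Sn t)) (loss01 _) _ i.
Qed.

Variable T : nat.
Hypothesis T_gt0 : (0 < T)%N.
Hypothesis eta_gt0 : forall t, (1 <= t)%N -> 0 < eta t.
Hypothesis eta_dec : forall t, (1 <= t)%N -> eta t.+1 <= eta t.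

Lemma regret_le_est (s : T.-tuple 'I_K) a :
  (forall t, (t < T)%N -> nth x0 s t \in act (take t s)) ->
  regret act loss s a <= ln K%:R / eta T
     + \sum_(0 <= t < T) (eta t.+1 / 2 + gamma t.+1) * \sum_(j in act (take t s)) est_path s t j
     + \sum_(0 <= t < T) (a \in act (take t s))%:R * (est_path s t a - loss (take t s) a).
Proof.
move=> active; set l := est_path s.
have round t : (0 <= t < T)%N ->
    (a \in act (take t s))%:R * (loss (take t s) (nth x0 s t) - loss (take t s) a) <=
    gamma t.+1 * \sum_(j in act (take t s)) l t j
    + (\sum_(i < K) qdist (eta t.+1) (Lcum (take t s)) i * l t i - l t a)
    + (a \in act (take t s))%:R * (l t a - loss (take t s) a).
  move=> /andP[_ tT]; set h := take t s.
  have := round_regret_le (q_ge0 h) (sum_q h) (qA_gt0 h) (g_gt0 h) (loss01 h) (active t tT) a.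
  by rewrite size_takel // size_tuple ltnW.
have second t : (0 <= t < T)%N ->
    eta t.+1 / 2 * \sum_(i < K) qdist (eta t.+1) (Lcum (take t s)) i * l t i ^+ 2 <=
    eta t.+1 / 2 * \sum_(j in act (take t s)) l t j.
  move=> /andP[_ tT]; set h := take t s.
  apply: ler_wpM2l; first by rewrite divr_ge0 // ltW // eta_gt0.
  have := sum_sq_lest_le (q_ge0 h) (sum_q h) (qA_gt0 h) (g_gt0 h) (loss01 h) (active t tT).
  by rewrite size_takel // size_tuple ltnW.
have ew : \sum_(0 <= t < T) (\sum_(i < K) qdist (eta t.+1) (Lcum (take t s)) i * l t i
     - eta t.+1 / 2 * \sum_(i < K) qdist (eta t.+1) (Lcum (take t s)) i * l t i ^+ 2)
    <= cumloss l T a + ln K%:R / eta T.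
  under eq_big_nat => t /andP[_ tT] do rewrite Lcum_take ?size_tuple ?(ltnW tT) //.
  exact (ew_regret_le K_gt0 eta_gt0 eta_dec (est_path_ge0 s) a T_gt0).
have -> : regret act loss s a = \sum_(0 <= t < T)
    (a \in act (take t s))%:R * (loss (take t s) (nth x0 s t) - loss (take t s) a).
  by rewrite big_mkord; apply: eq_bigr => t _; rewrite (tnth_nth x0).
apply: le_trans (ler_sum_nat round) _; have := ler_sum_nat second.
move: ew; rewrite /cumloss sumrB !big_split /= sumrN => ew sec.
under [X in _ <= _ + X + _]eq_bigr do rewrite mulrDl.
rewrite big_split /=; lra.
Qed.

Hypothesis gamma_dec : forall t, (1 <= t)%N -> gamma t.+1 <= gamma t.
Hypothesis eta_le_gamma : forall t, (1 <= t)%N -> eta t <= 2 * gamma t.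

Let gamma_le m n : (0 < m <= n)%N -> gamma n <= gamma m.
Proof.
case/andP; case: m => // m _; case: n => // n; rewrite ltnS => mn.
exact: (homo_leq (f := fun i => gamma i.+1) (r := fun x y => y <= x) (@lexx _ _)
  (fun y x z xy yz => le_trans yz xy) (fun i => gamma_dec (ltn0Sn i)) mn).
Qed.

(* Exponents of the two supermartingales; their coefficients are at most
   2 gamma_t in every round t <= T, as exp_moment_lest requires. *)
Definition arm_dev (a : 'I_K) (h : seq 'I_K) (x : 'I_K) : R :=
  2 * gamma T * ((a \in act h)%:R * (est h x a - loss h a)).

Definition total_dev (h : seq 'I_K) (x : 'I_K) : R :=
  (eta (size h).+1 / 2 + gamma (size h).+1) * \sum_(i in act h) (est h x i - loss h i).

Lemma arm_dev_step a h : (size h < T)%N -> \sum_(x < K) p h x * expR (arm_dev a h x) <= 1.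
Proof.
move=> hT; set alpha := fun i => (a == i)%:R * (2 * gamma T).
have devE x : arm_dev a h x = \sum_(i in act h) alpha i * (est h x i - loss h i).
  by under eq_bigr do rewrite -mulrA; rewrite sum_delta_mul mulrCA.
under eq_bigr do rewrite devE; apply: ftarl_exp_moment_le1 => i.
have gT : gamma T <= gamma (size h).+1 by apply: gamma_le.
have gT0 : 0 < gamma T by exact: gamma_gt0.
rewrite /alpha; case: (a == i); rewrite ?mul1r ?mul0r ?lexx; lra.
Qed.

Lemma total_dev_step h : \sum_(x < K) p h x * expR (total_dev h x) <= 1.
Proof.
under eq_bigr do rewrite /total_dev mulr_sumr; apply: ftarl_exp_moment_le1 => i.
have := eta_gt0 (ltn0Sn (size h)); have := eta_le_gamma (ltn0Sn (size h)).
have := g_gt0 h; lra.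
Qed.

Lemma est_take (s : T.-tuple 'I_K) t : (t < T)%N -> est (take t s) (nth x0 s t) =1 est_path s t.
Proof.
move=> tT i; have ts : (t <= size s)%N by rewrite size_tuple ltnW.
by rewrite /ftarl_p /probs_of (size_takel ts).
Qed.

Lemma path_sum_take (D : seq 'I_K -> 'I_K -> R) (s : T.-tuple 'I_K) :
  path_sum D [::] s = \sum_(0 <= t < T) D (take t s) (nth x0 s t).
Proof. by rewrite big_mkord; apply: eq_bigr => t _; rewrite (tnth_nth x0). Qed.

Lemma path_sum_arm_dev a (s : T.-tuple 'I_K) : path_sum (arm_dev a) [::] s =
  2 * gamma T * \sum_(0 <= t < T) (a \in act (take t s))%:R * (est_path s t a - loss (take t s) a).
Proof.
rewrite path_sum_take mulr_sumr; apply: eq_big_nat => t /andP[_ tT].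
by rewrite /arm_dev (est_take s tT).
Qed.

Lemma path_sum_total_dev (s : T.-tuple 'I_K) : path_sum total_dev [::] s =
  \sum_(0 <= t < T) (eta t.+1 / 2 + gamma t.+1) *
     \sum_(i in act (take t s)) (est_path s t i - loss (take t s) i).
Proof.
rewrite path_sum_take; apply: eq_big_nat => t /andP[_ tT].
have ts : (t <= size s)%N by rewrite size_tuple ltnW.
by rewrite /total_dev; under eq_bigr do rewrite (est_take s tT); rewrite (size_takel ts).
Qed.

Lemma regret_le_of_devs (s : T.-tuple 'I_K) a c1 c2 :
  (forall t, (t < T)%N -> nth x0 s t \in act (take t s)) ->
  path_sum (arm_dev a) [::] s <= c1 -> path_sum total_dev [::] s <= c2 ->
  regret act loss s a <=
    ln K%:R / eta T + c1 / (2 * gamma T) + c2 + weighted_active eta gamma act s.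
Proof.
move=> active; rewrite path_sum_arm_dev path_sum_total_dev => dev1 dev2.
have gT : 0 < 2 * gamma T by rewrite mulr_gt0 ?gamma_gt0.
have {}dev1 : \sum_(0 <= t < T) (a \in act (take t s))%:R * (est_path s t a - loss (take t s) a)
    <= c1 / (2 * gamma T) by rewrite ler_pdivlMr // mulrC.
have losses_le : \sum_(0 <= t < T) (eta t.+1 / 2 + gamma t.+1) *
    \sum_(i in act (take t s)) loss (take t s) i <= weighted_active eta gamma act s.
  rewrite /weighted_active -(big_mkord xpredT
    (fun t => (eta t.+1 / 2 + gamma t.+1) * #|act (take t s)|%:R)).
  apply: ler_sum_nat => t _; apply: ler_wpM2l.
    by rewrite addr_ge0 ?divr_ge0 // ltW // ?eta_gt0 ?gamma_gt0.
  by rewrite -sumr_const ler_sum // => i _; case/andP: (loss01 (take t s) i).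
move: dev2; under eq_big_nat => t _ do rewrite sumrB mulrBr.
rewrite sumrB => dev2; have := regret_le_est a active; lra.
Qed.

Lemma path_prob_gt0_active (s : T.-tuple 'I_K) : 0 < path_prob eta gamma act loss s ->
  forall t, (t < T)%N -> nth x0 s t \in act (take t s).
Proof.
move=> pos t tT; apply/negPn/negP => inactive; move: pos.
by rewrite /path_prob (bigD1 (Ordinal tT)) //= (tnth_nth x0) ftarl_p_inactive // mul0r ltxx.
Qed.

Lemma path_probE (s : T.-tuple 'I_K) : path_prob eta gamma act loss s = path_weight p [::] s.
Proof. by []. Qed.

Definition regret_bound (delta : R) (s : T.-tuple 'I_K) : R :=
  ln K%:R / eta T + ln (3 * K%:R / delta) / (2 * gamma T) + ln (3 / delta)
  + weighted_active eta gamma act s.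

Lemma sum_path_prob_regret_gt_le (delta : R) : 0 < delta ->
  \sum_(s : T.-tuple 'I_K | ~~ [forall a, regret act loss s a <= regret_bound delta s])
    path_prob eta gamma act loss s <= 2 * delta / 3.
Proof.
move=> delta_gt0; set c1 := ln (3 * K%:R / delta); set c2 := ln (3 / delta).
have K_pos : 0 < K%:R :> R by rewrite ltr0n.
have expNln (x : R) : 0 < x -> expR (- ln x) = x^-1 by move=> x_gt0; rewrite expRN lnK.
apply: le_trans (ler_sum_union (Q := fun s => c2 < path_sum total_dev [::] s)
  (Qs := fun a s => c1 < path_sum (arm_dev a) [::] s) _ _) _.
- by move=> s; rewrite path_probE path_weight_ge0 // => *; exact: ftarl_p_ge0.
- move=> s /forallPn[a bad] /path_prob_gt0_active active /=.
  case: ltP => //= dev2; apply/existsP; exists a; rewrite ltNge.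
  by apply: contra bad => dev1; exact: regret_le_of_devs.
have total_le : \sum_(s : T.-tuple 'I_K | c2 < path_sum total_dev [::] s)
    path_prob eta gamma act loss s <= delta / 3.
  rewrite -invf_div -expNln ?divr_gt0 //.
  exact (sum_path_weight_gt_le ftarl_p_ge0 c2 (fun h _ => total_dev_step h)).
have arm_le a : \sum_(s : T.-tuple 'I_K | c1 < path_sum (arm_dev a) [::] s)
    path_prob eta gamma act loss s <= delta / (3 * K%:R).
  rewrite -invf_div -expNln ?divr_gt0 ?mulr_gt0 //.
  exact (sum_path_weight_gt_le ftarl_p_ge0 c1 (fun h => arm_dev_step a (h := h))).
apply: le_trans (lerD total_le (ler_sum _ (fun a _ => arm_le a))) _.
rewrite sumr_const card_ord (_ : _ *+ K = delta / 3); first by lra.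
by rewrite -mulr_natr; field; rewrite gt_eqF.
Qed.

Lemma sum_path_prob_regret_le (delta : R) : 0 < delta ->
  1 - 2 * delta / 3 <=
  \sum_(s : T.-tuple 'I_K | [forall a, regret act loss s a <= regret_bound delta s])
    path_prob eta gamma act loss s.
Proof.
move=> delta_gt0; have := sum_path_prob_regret_gt_le delta_gt0.
have := sum_path_weight T [::] sum_ftarl_p.
rewrite (bigID (fun s => [forall a, regret act loss s a <= regret_bound delta s])) /=.
lra.
Qed.

End FTARLShannon.

Theorem theoremA3 (R : realType) (K T : nat) (eta gamma : nat -> R)
    (act : seq 'I_K -> {set 'I_K}) (loss : seq 'I_K -> 'I_K -> R) (delta : R) :
  (2 <= K)%N -> (1 <= T)%N ->
  (forall t, (1 <= t)%N -> 0 < eta t) ->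
  (forall t, (1 <= t)%N -> 0 < gamma t) ->
  (forall t, (1 <= t)%N -> eta t.+1 <= eta t) ->
  (forall t, (1 <= t)%N -> gamma t.+1 <= gamma t) ->
  (forall t, (1 <= t)%N -> eta t <= 2 * gamma t) ->
  (forall h, act h != set0) ->
  (forall h i, 0 <= loss h i <= 1) ->
  0 < delta < 1 ->
  1 - delta <=
  \sum_(s : T.-tuple 'I_K |
          [forall a : 'I_K,
             regret act loss s a <=
               ln (K%:R) / eta T + ln (3 * K%:R / delta) / (2 * gamma T)
               + ln (3 / delta) + weighted_active eta gamma act s])
     path_prob eta gamma act loss s.
Proof.
move=> K_ge2 T_gt0 eta_gt0 gamma_gt0 eta_dec gamma_dec eta_le act_neq0 loss01.
case/andP=> delta_gt0 _; have K_gt0 : (0 < K)%N by apply: leq_trans K_ge2.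
apply: le_trans (sum_path_prob_regret_le K_gt0 gamma_gt0 act_neq0 loss01 (Ordinal K_gt0)
  T_gt0 eta_gt0 eta_dec gamma_dec eta_le delta_gt0); lra.
Qed.
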